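(* Let $E_{\mathrm{out}}$ be a lazy expression, $\mathcal L$ a finite family of nonempty polyhedra in $\mathbb{R}^n$, and assign to each $C\in\mathcal L$ numbers $\ell_C\le\inf_C[\![E_{\mathrm{out}}]\!]$ and $u_C\ge\sup_C[\![E_{\mathrm{out}}]\!]$; define $\underline A(x)=\sup\{\ell_C: C\in\mathcal L,\,x\in C\}$ and $\overline A(x)=\inf\{u_C: C\in\mathcal L,\,x\in C\}$ ($\sup\emptyset=-\infty$, $\inf\emptyset=+\infty$). (i) Suppose all $\ell_C=\mathrm{LB}(E_{\mathrm{out}},C)$, $u_C=\mathrm{UB}(E_{\mathrm{out}},C)$, and let $\mathcal L'$ be obtained by replacing some $C\in\mathcal L$ by those of $C\cap\{a^\top x\le d\}$ and $C\cap\{a^\top x\ge d\}$ that are nonempty (for some $a\in\mathbb{R}^n$, $d\in\mathbb{R}$), with the children's numbers again given by $\mathrm{LB}$ and $\mathrm{UB}$. (ii) Alternatively, let the new data be obtained by replacing some $\ell_C$ by a larger value still $\le\inf_C[\![E_{\mathrm{out}}]\!]$, or some $u_C$ by a smaller value still $\ge\sup_C[\![E_{\mathrm{out}}]\!]$. In either case the new envelopes $\underline A',\overline A'$ satisfy $\underline A'(x)\ge\underline A(x)$ and $\overline A'(x)\le\overline A(x)$ for all $x\in\mathbb{R}^n$, and $\underline A'\le[\![E_{\mathrm{out}}]\!]\le\overline A'$ still holds.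
   Context: Lazy (scalar) expressions are generated by $E::=\mathtt{Affine}(w,b)\mid\mathtt{Sum}(\{E_i\})\mid\mathtt{Max}(\{E_i\})\mid\mathtt{Scale}(c,E)\mid\mathtt{Bias}(b,E)$ with denotations $[\![\mathtt{Affine}(w,b)]\!](x)=w^\top x+b$, $[\![\mathtt{Sum}]\!]=$ sum, $[\![\mathtt{Max}]\!]=$ pointwise max, $[\![\mathtt{Scale}(c,E)]\!]=c[\![E]\!]$, $[\![\mathtt{Bias}(b,E)]\!]=[\![E]\!]+b$. A polyhedron is a finite intersection of closed halfspaces. Bounds on a nonempty polyhedron $C$ (values in $\mathbb{R}\cup\{\pm\infty\}$, $0\cdot(\pm\infty)=0$): $\mathrm{LB}(\mathtt{Affine}(w,b),C)=\inf_C(w^\top x+b)$, $\mathrm{UB}(\mathtt{Affine}(w,b),C)=\sup_C(w^\top x+b)$; $\mathtt{Sum}$: sums of children's bounds; $\mathtt{Scale}(c,E)$: $(c\,\mathrm{LB},c\,\mathrm{UB})$ if $c\ge0$, $(c\,\mathrm{UB},c\,\mathrm{LB})$ if $c<0$; $\mathtt{Bias}(b,E)$: bounds shifted by $b$; $\mathtt{Max}$: maxima of children's $\mathrm{LB}$ and of their $\mathrm{UB}$. *)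

From HB Require Import structures.
From mathcomp Require Import all_boot all_order all_algebra.
From mathcomp Require Import all_classical all_reals ereal.
From Stdlib Require List.
Set Implicit Arguments. Unset Strict Implicit. Unset Printing Implicit Defensive.
Import Order.TTheory GRing.Theory Num.Theory.
Local Open Scope ring_scope.
Local Open Scope classical_set_scope.

Section Lazy.
Variables (R : realType) (n : nat).

Definition dot (w x : 'rV[R]_n) : R := \sum_(i < n) w 0 i * x 0 i.

(* Lazy expressions.  Max takes a nonempty family (head + tail). *)
Inductive lexpr : Type :=
| Affine of 'rV[R]_n & R
| Sum of seq lexpr
| Max of lexpr & seq lexpr
| Scale of R & lexpr
| Bias of R & lexpr.

Fixpoint lsem (E : lexpr) (x : 'rV[R]_n) {struct E} : R :=
  match E with
  | Affine w b => dot w x + b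
  | Sum es =>
      (fix sumf (l : seq lexpr) : R :=
         match l with [::] => 0 | e :: l' => lsem e x + sumf l' end) es
  | Max e es =>
      (fix mx (l : seq lexpr) : R :=
         match l with [::] => lsem e x | e' :: l' => Num.max (lsem e' x) (mx l') end) es
  | Scale c e => c * lsem e x
  | Bias b e => lsem e x + b
  end.

(* A polyhedron: finite list of constraints (a, d) meaning a^T x <= d. *)
Definition inpoly (P : seq ('rV[R]_n * R)) (x : 'rV[R]_n) : bool :=
  all (fun c => dot c.1 x <= c.2) P.

Definition poly_set (P : seq ('rV[R]_n * R)) : set 'rV[R]_n := [set x | inpoly P x].

Fixpoint bnds (E : lexpr) (C : set 'rV[R]_n) {struct E} : \bar R * \bar R :=
  match E with
  | Affine w b => (ereal_inf [set ((dot w x + b)%:E) | x in C],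
                   ereal_sup [set ((dot w x + b)%:E) | x in C])
  | Sum es =>
      (fix sumf (l : seq lexpr) : \bar R * \bar R :=
         match l with
         | [::] => (0%E, 0%E)
         | e :: l' => ((bnds e C).1 + (sumf l').1, (bnds e C).2 + (sumf l').2)%E
         end) es
  | Max e es =>
      (fix mx (l : seq lexpr) : \bar R * \bar R :=
         match l with
         | [::] => bnds e C
         | e' :: l' => (maxe (bnds e' C).1 (mx l').1, maxe (bnds e' C).2 (mx l').2)
         end) es
  | Scale c e =>
      if 0 <= c then ((c%:E * (bnds e C).1)%E, (c%:E * (bnds e C).2)%E)
      else ((c%:E * (bnds e C).2)%E, (c%:E * (bnds e C).1)%E)
  | Bias b e => ((bnds e C).1 + b%:E, (bnds e C).2 + b%:E)%E
  end.

Definition LB (E : lexpr) (C : set 'rV[R]_n) : \bar R := (bnds E C).1.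
Definition UB (E : lexpr) (C : set 'rV[R]_n) : \bar R := (bnds E C).2.

(* an element of the family L: a polyhedron C with numbers l_C, u_C *)
Record entry := Entry { cons : seq ('rV[R]_n * R); lo : \bar R; hi : \bar R }.

Definition valid_entry (E : lexpr) (e : entry) : Prop :=
  poly_set (cons e) !=set0 /\
  (lo e <= ereal_inf [set (lsem E x)%:E | x in poly_set (cons e)])%E /\
  (ereal_sup [set (lsem E x)%:E | x in poly_set (cons e)] <= hi e)%E.

Definition valid (E : lexpr) (L : seq entry) : Prop :=
  forall e, List.In e L -> valid_entry E e.

Definition Alo (L : seq entry) (x : 'rV[R]_n) : \bar R :=
  \big[maxe/-oo%E]_(e <- L | inpoly (cons e) x) lo e.
Definition Ahi (L : seq entry) (x : 'rV[R]_n) : \bar R :=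
  \big[mine/+oo%E]_(e <- L | inpoly (cons e) x) hi e.

Definition exact_entry (E : lexpr) (P : seq ('rV[R]_n * R)) : entry :=
  Entry P (LB E (poly_set P)) (UB E (poly_set P)).

(* case (i): all numbers are LB/UB, and one member C is split by a^T x <= d / a^T x >= d,
   keeping the nonempty children (with exact LB/UB numbers) *)
Definition split_step (E : lexpr) (L L' : seq entry) : Prop :=
  (forall e, List.In e L -> lo e = LB E (poly_set (cons e)) /\ hi e = UB E (poly_set (cons e))) /\
  exists (L1 L2 : seq entry) (e : entry) (a : 'rV[R]_n) (d : R),
    L = L1 ++ e :: L2 /\
    L' = L1 ++ [seq c <- [:: exact_entry E ((a, d) :: cons e);
                             exact_entry E ((- a, - d) :: cons e)]
                | `[< poly_set (cons c) !=set0 >]] ++ L2.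

Definition tighten_step (E : lexpr) (L L' : seq entry) : Prop :=
  exists (L1 L2 : seq entry) (e e' : entry),
    L = L1 ++ e :: L2 /\ L' = L1 ++ e' :: L2 /\ cons e' = cons e /\
    ((hi e' = hi e /\ (lo e <= lo e')%E /\
      (lo e' <= ereal_inf [set (lsem E x)%:E | x in poly_set (cons e)])%E) \/
     (lo e' = lo e /\ (hi e' <= hi e)%E /\
      (ereal_sup [set (lsem E x)%:E | x in poly_set (cons e)] <= hi e')%E)).

End Lazy.

(** Both kinds of step preserve the standing assumptions on the data, and
    every member [C] of the old family containing [x] is dominated at [x] by a
    member of the new family containing [x]: by its tightened copy, or, for a
    split, by the child containing [x], whose [LB]/[UB] are at least as tight
    because all these bounds are monotone under shrinking the domain.
    Domination gives the monotonicity of the envelopes, and the standing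
    assumptions give [l_C <= [[E]](x) <= u_C] for every member [C] containing
    [x], hence the sandwich. *)

From HB Require Import structures.
From mathcomp Require Import all_boot all_order all_algebra.
From mathcomp Require Import all_classical all_reals ereal.
From Stdlib Require List.
Import Order.TTheory GRing.Theory Num.Theory.
Local Open Scope ring_scope.

Set Implicit Arguments. Unset Strict Implicit. Unset Printing Implicit Defensive.

(* [List.filter_In], restated for [seq.filter] so that it applies as a view. *)
Lemma In_filter (T : Type) (p : pred T) (s : seq T) (y : T) :
  List.In y [seq x <- s | p x] <-> List.In y s /\ p y.
Proof. exact: List.filter_In. Qed.

Lemma lee_wnmul2l (R : realDomainType) (c : R) (a b : \bar R) :
  c <= 0 -> (a <= b)%E -> (c%:E * b <= c%:E * a)%E.
Proof.
move=> c_le0 ab; rewrite -(opprK c) EFinN !mulNe leeN2.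
by apply: lee_wpmul2l => //; rewrite lee_fin oppr_ge0.
Qed.

Section LazyBounds.
Variables (R : realType) (n : nat).
Local Open Scope classical_set_scope.
Local Open Scope ereal_scope.

Lemma dotN (a x : 'rV[R]_n) : dot (- a) x = (- dot a x)%R.
Proof. by rewrite /dot -sumrN; apply: eq_bigr => i _; rewrite mxE mulNr. Qed.

Lemma lexpr_nested_ind (P : lexpr R n -> Prop) :
  (forall w b, P (Affine w b)) ->
  P (Sum [::]) -> (forall e l, P e -> P (Sum l) -> P (Sum (e :: l))) ->
  (forall e, P e -> P (Max e [::])) ->
  (forall e e' l, P (Max e l) -> P e' -> P (Max e (e' :: l))) ->
  (forall c e, P e -> P (Scale c e)) ->
  (forall b e, P e -> P (Bias b e)) ->
  forall E, P E.
Proof.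
move=> PA PS0 PS PM0 PM PSc PB; fix IH 1 => -[w b|l|e l|c e|b e].
- exact: PA.
- by elim: l => [|e l IHl]; [exact: PS0 | exact: PS (IH e) IHl].
- by elim: l => [|e' l IHl]; [exact: PM0 (IH e) | exact: PM IHl (IH e')].
- exact: PSc (IH e).
- exact: PB (IH e).
Qed.

Lemma bnds_subset (C C' : set 'rV[R]_n) (E : lexpr R n) : C' `<=` C ->
  (bnds E C).1 <= (bnds E C').1 /\ (bnds E C').2 <= (bnds E C).2.
Proof.
move=> C'C; elim/lexpr_nested_ind: E => //=.
- move=> w b; split; [apply: ereal_inf_le_tmp | apply: ereal_sup_le];
    exact: image_subset.
- by move=> e l [le1 ge1] [le2 ge2]; split; apply: leeD.
- move=> e e' l [le1 ge1] [le2 ge2].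
  by rewrite !ge_max !le_max le1 ge1 le2 ge2 !orbT.
- move=> c e [le1 ge1].
  case: ifPn => [c_ge0|]; last rewrite -ltNge => /ltW c_le0.
    by split; apply: lee_wpmul2l; rewrite ?lee_fin.
  by split; apply: lee_wnmul2l.
- by move=> b e [le1 ge1]; split; apply: leeD.
Qed.

Lemma bnds_lsem (C : set 'rV[R]_n) (E : lexpr R n) (x : 'rV[R]_n) : C x ->
  (bnds E C).1 <= (lsem E x)%:E /\ (lsem E x)%:E <= (bnds E C).2.
Proof.
move=> Cx; elim/lexpr_nested_ind: E => //=.
- move=> w b; split; [apply: ereal_inf_lbound | apply: ereal_sup_ubound];
    by exists x.
- by move=> e l [le1 ge1] [le2 ge2]; rewrite EFinD; split; apply: leeD.
- move=> e e' l [le1 ge1] [le2 ge2].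
  by rewrite EFin_max !ge_max !le_max le1 ge1 le2 ge2 !orbT.
- move=> c e [le1 ge1]; rewrite EFinM.
  case: ifPn => [c_ge0|]; last rewrite -ltNge => /ltW c_le0.
    by split; apply: lee_wpmul2l; rewrite ?lee_fin.
  by split; apply: lee_wnmul2l.
- by move=> b e [le1 ge1]; rewrite EFinD; split; apply: leeD.
Qed.

End LazyBounds.

Section Envelopes.
Variables (R : realType) (n : nat).
Implicit Types (L : seq (entry R n)) (e f : entry R n) (x : 'rV[R]_n).
Local Open Scope classical_set_scope.
Local Open Scope ereal_scope.

Lemma Alo_le L x y :
  (forall e, List.In e L -> inpoly (cons e) x -> lo e <= y) -> Alo L x <= y.
Proof.
rewrite /Alo; elim: L => [|f L IH] le_y; first by rewrite big_nil leNye.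
rewrite big_cons; case: ifP => fx; last by apply: IH => e eL; apply: le_y; right.
by rewrite ge_max le_y /= ?IH //; [move=> e eL; apply: le_y; right | left].
Qed.

Lemma le_Alo L x e : List.In e L -> inpoly (cons e) x -> lo e <= Alo L x.
Proof.
rewrite /Alo; elim: L => [|f L IH] //= [<-|eL] ex; rewrite big_cons.
  by rewrite ex le_max lexx.
by case: ifP => _; rewrite ?le_max IH ?orbT.
Qed.

Lemma le_Ahi L x y :
  (forall e, List.In e L -> inpoly (cons e) x -> y <= hi e) -> y <= Ahi L x.
Proof.
rewrite /Ahi; elim: L => [|f L IH] ge_y; first by rewrite big_nil leey.
rewrite big_cons; case: ifP => fx; last by apply: IH => e eL; apply: ge_y; right.
by rewrite le_min ge_y /= ?IH //; [move=> e eL; apply: ge_y; right | left].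
Qed.

Lemma Ahi_le L x e : List.In e L -> inpoly (cons e) x -> Ahi L x <= hi e.
Proof.
rewrite /Ahi; elim: L => [|f L IH] //= [<-|eL] ex; rewrite big_cons.
  by rewrite ex ge_min lexx.
by case: ifP => _; rewrite ?ge_min IH ?orbT.
Qed.

Definition refines L L' : Prop :=
  forall e x, List.In e L -> inpoly (cons e) x ->
  exists2 f, List.In f L' & [/\ inpoly (cons f) x, lo e <= lo f & hi f <= hi e].

Lemma Alo_refines L L' x : refines L L' -> Alo L x <= Alo L' x.
Proof.
move=> LL'; apply: Alo_le => e eL ex; have [f fL' [fx lo_ef _]] := LL' e x eL ex.
exact: le_trans lo_ef (le_Alo fL' fx).
Qed.

Lemma Ahi_refines L L' x : refines L L' -> Ahi L' x <= Ahi L x.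
Proof.
move=> LL'; apply: le_Ahi => e eL ex; have [f fL' [fx _ hi_fe]] := LL' e x eL ex.
exact: le_trans (Ahi_le fL' fx) hi_fe.
Qed.

Lemma refines_refl L : refines L L.
Proof. by move=> e x eL ex; exists e. Qed.

Lemma refines_cat L1 L2 L1' L2' :
  refines L1 L1' -> refines L2 L2' -> refines (L1 ++ L2) (L1' ++ L2').
Proof.
move=> r1 r2 e x /List.in_app_iff[eL|eL] ex.
  by have [f fL ?] := r1 e x eL ex; exists f => //; apply/List.in_app_iff; left.
by have [f fL ?] := r2 e x eL ex; exists f => //; apply/List.in_app_iff; right.
Qed.

Lemma refines_replace L1 L2 e L : refines [:: e] L ->
  refines (L1 ++ e :: L2) (L1 ++ L ++ L2).
Proof.
move=> eL.
exact: refines_cat (@refines_refl L1) (refines_cat eL (@refines_refl L2)).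
Qed.

Variable E : lexpr R n.

Lemma valid_cat L1 L2 : valid E (L1 ++ L2) <-> valid E L1 /\ valid E L2.
Proof.
split=> [vL|[vL1 vL2] e /List.in_app_iff[]]; [|exact: vL1 | exact: vL2].
by split=> e eL; apply: vL; apply/List.in_app_iff; [left | right].
Qed.

Lemma valid_cons e L : valid E (e :: L) <-> valid_entry E e /\ valid E L.
Proof.
split=> [vL|[ve vL] f [<-|fL] //]; last exact: vL.
by split=> [|f fL]; apply: vL; [left | right].
Qed.

Lemma valid_entry_lsem e x : valid_entry E e -> inpoly (cons e) x ->
  lo e <= (lsem E x)%:E /\ (lsem E x)%:E <= hi e.
Proof.
move=> [_ [lo_inf sup_hi]] ex; split.
  by apply: le_trans lo_inf _; apply: ereal_inf_lbound; exists x.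
by apply: le_trans sup_hi; apply: ereal_sup_ubound; exists x.
Qed.

Lemma Alo_le_lsem L x : valid E L -> Alo L x <= (lsem E x)%:E.
Proof.
by move=> vL; apply: Alo_le => e eL ex; case: (valid_entry_lsem (vL e eL) ex).
Qed.

Lemma lsem_le_Ahi L x : valid E L -> (lsem E x)%:E <= Ahi L x.
Proof.
by move=> vL; apply: le_Ahi => e eL ex; case: (valid_entry_lsem (vL e eL) ex).
Qed.

Lemma exact_entry_valid P : poly_set P !=set0 -> valid_entry E (exact_entry E P).
Proof.
move=> P_ne; split=> //; split.
  by apply: le_ereal_inf_tmp => _ [x Px <-]; case: (bnds_lsem E Px).
by apply: ge_ereal_sup => _ [x Px <-]; case: (bnds_lsem E Px).
Qed.

Definition split_candidates (P : seq ('rV[R]_n * R)) (a : 'rV[R]_n) (d : R) :=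
  [:: exact_entry E ((a, d) :: P); exact_entry E (((- a)%R, (- d)%R) :: P)].

Definition split_children (P : seq ('rV[R]_n * R)) (a : 'rV[R]_n) (d : R) :=
  [seq c <- split_candidates P a d | `[< poly_set (cons c) !=set0 >]].

Lemma valid_split_children P a d : valid E (split_children P a d).
Proof.
move=> c /In_filter[c_cand /asboolP c_ne].
by move: c_cand c_ne => /= [<-|[<-|[]]]; exact: exact_entry_valid.
Qed.

Lemma exact_refines_split_children e a d :
  lo e = LB E (poly_set (cons e)) -> hi e = UB E (poly_set (cons e)) ->
  refines [:: e] (split_children (cons e) a d).
Proof.
move=> lo_e hi_e _ x [<-|[]] ex.
have child_dominates a' d' : inpoly ((a', d') :: cons e) x ->
    List.In (exact_entry E ((a', d') :: cons e)) (split_candidates (cons e) a d) ->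
    exists2 f, List.In f (split_children (cons e) a d) &
      [/\ inpoly (cons f) x, lo e <= lo f & hi f <= hi e].
  move=> cx c_cand; exists (exact_entry E ((a', d') :: cons e)).
    by apply/In_filter; split=> //; apply/asboolP; exists x.
  have sub : poly_set ((a', d') :: cons e) `<=` poly_set (cons e).
    by move=> y /andP[].
  by rewrite lo_e hi_e; have [] := bnds_subset E sub.
have [xd|dx] := leP (dot a x) d.
  by apply: (child_dominates a d); [rewrite /= xd | left].
apply: (child_dominates (- a)%R (- d)%R); last by right; left.
by rewrite /= dotN lerN2 ltW.
Qed.

Lemma split_step_valid L L' : valid E L -> split_step E L L' -> valid E L'.
Proof.
move=> vL [_ [L1 [L2 [e [a [d [eqL ->]]]]]]].
move: vL; rewrite eqL => /valid_cat[vL1 /valid_cons[_ vL2]].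
apply/valid_cat; split=> //.
by apply/valid_cat; split=> //; apply: valid_split_children.
Qed.

Lemma split_step_refines L L' : split_step E L L' -> refines L L'.
Proof.
move=> [exL [L1 [L2 [e [a [d [eqL ->]]]]]]].
have [lo_e hi_e] :
    lo e = LB E (poly_set (cons e)) /\ hi e = UB E (poly_set (cons e)).
  by apply: exL; rewrite eqL; apply/List.in_app_iff; right; left.
by rewrite eqL; apply: refines_replace; apply: exact_refines_split_children.
Qed.

Lemma tighten_step_valid L L' : valid E L -> tighten_step E L L' -> valid E L'.
Proof.
move=> vL [L1 [L2 [e [e' [eqL [-> [cons_e' tight]]]]]]].
move: vL; rewrite eqL => /valid_cat[vL1 /valid_cons[[e_ne [lo_inf sup_hi]] vL2]].
apply/valid_cat; split=> //; apply/valid_cons; split=> //.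
rewrite /valid_entry cons_e'.
by case: tight => [[-> [_ lo'_inf]]|[-> [_ sup'_hi]]].
Qed.

Lemma tighten_step_refines L L' : tighten_step E L L' -> refines L L'.
Proof.
move=> [L1 [L2 [e [e' [-> [-> [cons_e' tight]]]]]]].
apply: (@refines_replace _ _ _ [:: e']) => _ x [<-|[]] ex.
exists e'; first by left.
by rewrite cons_e'; case: tight => [[-> [lo_le _]]|[-> [hi_le _]]].
Qed.

End Envelopes.

Theorem mainTheorem9 (R : realType) (n : nat) (E : lexpr R n) (L L' : seq (entry R n)) :
  valid E L ->
  (split_step E L L' \/ tighten_step E L L') ->
  forall x : 'rV[R]_n,
    (Alo L x <= Alo L' x)%E /\ (Ahi L' x <= Ahi L x)%E /\
    (Alo L' x <= (lsem E x)%:E)%E /\ ((lsem E x)%:E <= Ahi L' x)%E.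
Proof.
move=> vL step x.
have vL' : valid E L'.
  by case: step => [/split_step_valid|/tighten_step_valid]; apply.
have LL' : refines L L'.
  by case: step => [/split_step_refines|/tighten_step_refines].
split; first exact: Alo_refines.
split; first exact: Ahi_refines.
by split; [apply: Alo_le_lsem | apply: lsem_le_Ahi].
Qed.
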